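(* Let two circles $\Omega$ and $\omega$ meet at a point $X$. Let $A, B, C, D$ be points on $\omega$ with $AB \parallel CD$. Let lines $XA, XB, XC, XD$ meet $\Omega$ again at $E, F, G, H$ respectively. Then $EF \parallel GH$. *)

From HB Require Import structures.
From mathcomp Require Import all_boot all_order all_algebra.
Set Implicit Arguments. Unset Strict Implicit. Unset Printing Implicit Defensive.
Import Order.TTheory GRing.Theory Num.Theory.
Local Open Scope ring_scope.

Definition point (R : realFieldType) := (R * R)%type.

Section Geo.
Variable R : realFieldType.

Definition dot (u v : point R) : R := u.1 * v.1 + u.2 * v.2.
Definition vsub (Q P : point R) : point R := (Q.1 - P.1, Q.2 - P.2).
Definition cross (u v : point R) : R := u.1 * v.2 - u.2 * v.1.

Record circle := Circle { center : point R; radius : R }.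
Definition on_circle (c : circle) (P : point R) : Prop :=
  dot (vsub P (center c)) (vsub P (center c)) = radius c ^+ 2.

Definition collinear (P Q S : point R) : Prop := cross (vsub Q P) (vsub S P) = 0.

(* line PQ is parallel to line P'Q' (coincident lines count as parallel) *)
Definition parallel (P Q P' Q' : point R) : Prop :=
  cross (vsub Q P) (vsub Q' P') = 0.

Definition tangent_at (c : circle) (X A : point R) : Prop :=
  dot (vsub A X) (vsub X (center c)) = 0.

(* E is the second intersection ("meets again") of line XA with circle c,
   where X lies on c and A <> X: E lies on c and on line XA, and E differs
   from X unless line XA is tangent to c at X (then E = X). *)
Definition second_inter (c : circle) (X A E : point R) : Prop :=
  on_circle c E /\ collinear X A E /\ (E <> X \/ tangent_at c X A).

End Geo.

From mathcomp Require Import all_boot all_order all_algebra.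
From mathcomp Require Import ring.
Set Implicit Arguments. Unset Strict Implicit. Unset Printing Implicit Defensive.
Import Order.TTheory GRing.Theory Num.Theory.
Local Open Scope ring_scope.

(* Identify the plane with the complex numbers, and let Q, O be the centres of
   omega, Omega, u = Q - X and w = O - X.  For P on omega with a = P - X, both
   chords satisfy conj(a) (P - Q) = conj(u) a and conj(a) (E - O) = conj(w) a,
   whence conj(u) (E - O) = conj(w) (P - Q).  So P |-> E is the similarity
   z |-> O + (conj w / conj u) (z - Q), which preserves distinctness and
   parallelism. *)

Section Twist.
Variable R : realFieldType.
Implicit Types (u v z : point R) (P Q X : point R).

(* The complex product conj(u) * v. *)
Definition twist u v : point R := (dot u v, cross u v).

Lemma vsub_eq0 P Q : (vsub P Q == (0, 0)) = (P == Q).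
Proof.
case: P Q => [p1 p2] [q1 q2]; rewrite /vsub !xpair_eqE /=.
by rewrite !subr_eq0.
Qed.

Lemma vsubKr P Q X : vsub (vsub P X) (vsub Q X) = vsub P Q.
Proof. by rewrite /vsub /=; congr pair; ring. Qed.

Lemma dot_self_eq0 u : (dot u u == 0) = (u == (0, 0)).
Proof.
case: u => [u1 u2]; rewrite /dot xpair_eqE /= -!expr2.
by rewrite paddr_eq0 ?sqr_ge0 // !sqrf_eq0.
Qed.

Lemma twist_vsub u P Q : twist u (vsub P Q) = vsub (twist u P) (twist u Q).
Proof. by rewrite /twist /vsub /dot /cross /=; congr pair; ring. Qed.

Lemma twist_self u : twist u u = (dot u u, 0).
Proof. by rewrite /twist /cross mulrC subrr. Qed.

Lemma twistCA u v z : twist u (twist v z) = twist v (twist u z).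
Proof. by rewrite /twist /dot /cross /=; congr pair; ring. Qed.

(* conj(c) = 2 Re(c) - c for c = conj(u) v. *)
Lemma twist_flip u v : vsub (2 * dot u v, 0) (twist u v) = twist v u.
Proof. by rewrite /twist /vsub /dot /cross /=; congr pair; ring. Qed.

Lemma dot_twist u v z : dot (twist u v) (twist u z) = dot u u * dot v z.
Proof. by rewrite /twist /dot /cross /=; ring. Qed.

Lemma cross_twist u v z : cross (twist u v) (twist u z) = dot u u * cross v z.
Proof. by rewrite /twist /dot /cross /=; ring. Qed.

Lemma twist_eq0 u v : dot u u != 0 -> (twist u v == (0, 0)) = (v == (0, 0)).
Proof.
case: u v => [u1 u2] [v1 v2] nz_u; rewrite /twist /dot /cross !xpair_eqE /=.
apply/andP/andP => [[/eqP t1 /eqP t2]|[/eqP -> /eqP ->]]; last first.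
  by rewrite !mulr0 addr0 subr0.
have v1N : v1 * dot (u1, u2) (u1, u2) = u1 * (u1 * v1 + u2 * v2) - u2 * (u1 * v2 - u2 * v1).
  by rewrite /dot /=; ring.
have v2N : v2 * dot (u1, u2) (u1, u2) = u2 * (u1 * v1 + u2 * v2) + u1 * (u1 * v2 - u2 * v1).
  by rewrite /dot /=; ring.
rewrite t1 t2 !mulr0 subr0 addr0 in v1N v2N.
by split; apply/eqP; apply: (mulIf nz_u); rewrite mul0r.
Qed.

Lemma twistI u : dot u u != 0 -> injective (twist u).
Proof.
move=> nz_u P Q eq_tw; apply/eqP; rewrite -vsub_eq0 -(twist_eq0 _ nz_u).
by rewrite twist_vsub eq_tw -twist_vsub (twist_eq0 _ nz_u) vsub_eq0.
Qed.

End Twist.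

Section SecondIntersection.
Variables (R : realFieldType) (Om om : circle R) (X : point R).
Hypotheses (OmX : on_circle Om X) (omX : on_circle om X).

Local Notation u := (vsub (center om) X).
Local Notation w := (vsub (center Om) X).

Lemma on_circle_chord (c : circle R) P :
  on_circle c X -> on_circle c P ->
  dot (vsub P X) (vsub P X) = 2 * dot (vsub P X) (vsub (center c) X).
Proof.
rewrite /on_circle => cX cP; apply/eqP; rewrite -subr_eq0 -(subrr (radius c ^+ 2)).
by rewrite -{1}cP -cX /dot /vsub /=; apply/eqP; ring.
Qed.

Lemma second_inter_dot P E : P <> X -> second_inter Om X P E ->
  dot (vsub P X) (vsub E X) = 2 * dot (vsub P X) w.
Proof.
move=> PX [OmE [colE tanE]]; set a := vsub P X in colE tanE *; set e := vsub E X.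
have nz_a : dot a a != 0 by rewrite dot_self_eq0 vsub_eq0; exact/eqP.
have tw_ae : twist a e = (dot a e, 0) by rewrite /twist colE.
have ee := on_circle_chord OmX OmE.
have dot_real t v : dot (t, 0) v = t * v.1 by rewrite /dot mul0r addr0.
(* a and e are collinear, so |a|^2 |e|^2 = (a.e)^2 and |a|^2 (e.w) = (a.e) (a.w). *)
have ae2 : dot a e * dot a e = 2 * (dot a e * dot a w).
  have := dot_twist a e e; have := dot_twist a e w.
  by rewrite ee tw_ae !dot_real /= => -> ->; ring.
have [ae0|nz_ae] := eqVneq (dot a e) 0; last by apply: (mulfI nz_ae); rewrite ae2; ring.
have /eqP e0 : e == (0, 0) by rewrite -(twist_eq0 _ nz_a) tw_ae ae0.
have EX : E = X by apply/eqP; rewrite -vsub_eq0 -/e e0.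
case: tanE => [//|tan]; rewrite ae0.
have -> : dot a w = - dot a (vsub X (center Om)) by rewrite /dot /vsub /=; ring.
by rewrite tan oppr0 mulr0.
Qed.

Lemma second_inter_twist P E :
  on_circle om P -> P <> X -> second_inter Om X P E ->
  twist u (vsub E (center Om)) = twist w (vsub P (center om)).
Proof.
move=> omP PX sE.
have ae := second_inter_dot PX sE; have aa := on_circle_chord omX omP.
have tw_ae : twist (vsub P X) (vsub E X) = (dot (vsub P X) (vsub E X), 0).
  by case: sE => _ [colE _]; rewrite /twist colE.
set a := vsub P X in ae aa tw_ae PX.
have nz_a : dot a a != 0 by rewrite dot_self_eq0 vsub_eq0; exact/eqP.
rewrite -(vsubKr E _ X) -(vsubKr P _ X) -/a; apply: (twistI nz_a).
rewrite twistCA [RHS]twistCA [in LHS](twist_vsub a) [in RHS](twist_vsub a) twist_self.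
by rewrite tw_ae ae aa !twist_flip twistCA.
Qed.

Lemma second_inter_vsub P E P' E' :
  on_circle om P -> on_circle om P' -> P <> X -> P' <> X ->
  second_inter Om X P E -> second_inter Om X P' E' ->
  twist u (vsub E' E) = twist w (vsub P' P).
Proof.
move=> omP omP' PX P'X sE sE'.
rewrite -(vsubKr E' E (center Om)) -(vsubKr P' P (center om)).
rewrite (twist_vsub u) (twist_vsub w).
by rewrite (second_inter_twist omP PX sE) (second_inter_twist omP' P'X sE').
Qed.

End SecondIntersection.

Lemma dot_center_neq0 (R : realFieldType) (c : circle R) (X : point R) :
  0 < radius c -> on_circle c X ->
  dot (vsub (center c) X) (vsub (center c) X) != 0.
Proof.
move=> r_gt0 cX.
have -> : dot (vsub (center c) X) (vsub (center c) X) = radius c ^+ 2.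
  by rewrite -cX /dot /vsub /=; ring.
by rewrite expf_neq0 // gt_eqF.
Qed.

Theorem lemma4p2 (R : realFieldType) (Om om : circle R)
  (X A B C D E F G H : point R) :
  0 < radius Om -> 0 < radius om ->
  on_circle Om X -> on_circle om X ->
  on_circle om A -> on_circle om B -> on_circle om C -> on_circle om D ->
  A <> X -> B <> X -> C <> X -> D <> X ->
  A <> B -> C <> D ->
  parallel A B C D ->
  second_inter Om X A E -> second_inter Om X B F ->
  second_inter Om X C G -> second_inter Om X D H ->
  E <> F /\ G <> H /\ parallel E F G H.
Proof.
move=> rOm rom OmX omX omA omB omC omD AX BX CX DX AB CD AB_CD sE sF sG sH.
have nz_u := dot_center_neq0 rom omX; have nz_w := dot_center_neq0 rOm OmX.
have EF := second_inter_vsub OmX omX omA omB AX BX sE sF.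
have GH := second_inter_vsub OmX omX omC omD CX DX sG sH.
have image_neq P Q S T : twist (vsub (center om) X) (vsub T S) =
    twist (vsub (center Om) X) (vsub Q P) -> P <> Q -> S <> T.
  move=> ST PQ; apply/eqP; rewrite eq_sym -vsub_eq0 -(twist_eq0 _ nz_u) ST.
  by rewrite (twist_eq0 _ nz_w) vsub_eq0 eq_sym; exact/eqP.
split; [exact: image_neq EF AB | split; first exact: image_neq GH CD].
apply/eqP; rewrite /parallel -(mulrI_eq0 _ (lregP nz_u)) -cross_twist EF GH.
by rewrite cross_twist AB_CD mulr0.
Qed.
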